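(* Let $m,n\ge2$, $D\in\mathcal{D}$ and $j\in\{1,\dots,n\}$. If the $j$-th column of $D$ has at most $m-2$ nonzero entries, then $\{D,\mathrm{U}_j\}$ is not $\mathcal{I}$-maximized.
   Context: Channels from $\{1,\dots,m\}$ to $\{1,\dots,n\}$ are $m\times n$ row-stochastic matrices; $\mathcal{D}$ is the set of deterministic (0-1) channels, $\mathrm{rank}(D)$ the matrix rank; $\mathrm{U}_j\in\mathcal{D}$ is the deterministic channel whose $j$-th column is all ones. For a channel $W$, $\Lambda(W)=\{\lambda\text{ probability distribution on }\mathcal{D}: W=\sum_D\lambda_DD\}$, $C_{11}(\lambda)=\sum_D\lambda_D\log_2\mathrm{rank}(D)$, $\overline{C}_{11}(W)=\sup_{\lambda\in\Lambda(W)}C_{11}(\lambda)$. A subset $S\subseteq\mathcal{D}$ is $\mathcal{I}$-maximized if there is a probability distribution $\lambda$ on $\mathcal{D}$ with $\mathrm{supp}(\lambda)=S$ and $C_{11}(\lambda)=\overline{C}_{11}(W)$ where $W=\sum_D\lambda_DD$. *)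

From HB Require Import structures.
From mathcomp Require Import all_boot all_order all_algebra.
From mathcomp Require Import all_classical all_reals all_analysis.
Set Implicit Arguments. Unset Strict Implicit. Unset Printing Implicit Defensive.
Import Order.TTheory GRing.Theory Num.Theory.
Local Open Scope ring_scope.

(* A deterministic channel from {1..m} to {1..n} is a 0-1 row-stochastic
   m x n matrix; it is determined by the function sending each row i to the
   unique column holding its 1.  We index the (finite) set D of deterministic
   channels by such functions. *)
Definition detchan (m n : nat) := {ffun 'I_m -> 'I_n}.

Definition detmx (R : realType) m n (D : detchan m n) : 'M[R]_(m, n) :=
  \matrix_(i < m, j < n) ((D i == j)%:R : R).

Definition Uchan m n (j : 'I_n) : detchan m n := [ffun _ => j].

Definition is_distr (R : realType) m n (lam : {ffun detchan m n -> R}) : Prop :=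
  (forall D, 0 <= lam D) /\ \sum_D lam D = 1.

Definition mixture (R : realType) m n (lam : {ffun detchan m n -> R}) : 'M[R]_(m, n) :=
  \sum_D lam D *: detmx R D.

Definition Lambda (R : realType) m n (W : 'M[R]_(m, n)) : set {ffun detchan m n -> R} :=
  [set lam | is_distr lam /\ W = mixture lam].

Definition log2 (R : realType) (x : R) : R := ln x / ln 2.

Definition C11 (R : realType) m n (lam : {ffun detchan m n -> R}) : R :=
  \sum_D lam D * log2 ((\rank (detmx R D))%:R).

Definition C11bar (R : realType) m n (W : 'M[R]_(m, n)) : R :=
  sup [set C11 lam | lam in Lambda W].

Definition supp (R : realType) m n (lam : {ffun detchan m n -> R}) : {set detchan m n} :=
  [set D | lam D != 0].

Definition I_maximized (R : realType) m n (S : {set detchan m n}) : Prop :=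
  exists lam : {ffun detchan m n -> R},
    is_distr lam /\ supp lam = S /\ C11 lam = C11bar (mixture lam).

From HB Require Import structures.
From mathcomp Require Import all_boot all_order all_algebra.
From mathcomp Require Import all_classical all_reals all_analysis.
From mathcomp Require Import lra zify.
Set Implicit Arguments. Unset Strict Implicit. Unset Printing Implicit Defensive.
Import Order.TTheory GRing.Theory Num.Theory.
Local Open Scope ring_scope.

(* At least two rows i1, i2 of D avoid column j.  Exchanging row i1 between
   D and U_j yields deterministic channels D1, D2 with D1 + D2 = D + U_j.
   Both D1 and D2 send i1 and i2 to different columns, so they have rank at
   least 2, while rank D <= rank D1 + 1 and rank U_j = 1; hence
   rank D * rank U_j < rank D1 * rank D2.  Moving some mass from D and U_j to
   D1 and D2 leaves the mixture unchanged and strictly increases C_11, so no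
   distribution supported on {D, U_j} attains the supremum. *)

Section ShiftMass.
Variables (T : finType) (R : realDomainType).
Implicit Types (lam : {ffun T -> R}) (t : R) (a b c d : T).

Definition shift_mass lam t a b c d : {ffun T -> R} :=
  [ffun x => lam x + t * ((x == c)%:R + (x == d)%:R - (x == a)%:R - (x == b)%:R)].

Lemma sum_delta_scale (V : lmodType R) (F : T -> V) a :
  \sum_x (x == a)%:R *: F x = F a.
Proof.
rewrite (bigD1 a) //= eqxx scale1r big1 ?addr0 // => x /negbTE ->.
by rewrite scale0r.
Qed.

Lemma sum_shift_mass (V : lmodType R) lam t a b c d (F : T -> V) :
  \sum_x shift_mass lam t a b c d x *: F x
  = \sum_x lam x *: F x + t *: (F c + F d - F a - F b).
Proof.
under eq_bigr do rewrite ffunE scalerDl -scalerA !scalerBl scalerDl.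
by rewrite big_split /= -scaler_sumr !sumrB big_split /= !sum_delta_scale.
Qed.

Lemma shift_mass_ge0 lam t a b c d :
    (forall x, 0 <= lam x) -> 0 <= t -> t *+ 2 <= lam a -> t *+ 2 <= lam b ->
  forall x, 0 <= shift_mass lam t a b c d x.
Proof.
move=> lam_ge0 t_ge0 ta tb x; rewrite ffunE.
have lam_x : t * (x == a)%:R + t * (x == b)%:R <= lam x.
  have := lam_ge0 x.
  by case: eqP => [->|_]; case: eqP => [->|_]; rewrite ?mulr1 ?mulr0; lra.
have := mulr_ge0 t_ge0 (ler0n R (x == c)); have := mulr_ge0 t_ge0 (ler0n R (x == d)).
lra.
Qed.

End ShiftMass.

Section MxRank.
Variables (F : fieldType) (p q : nat).
Implicit Types (A B X : 'M[F]_(p, q)).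

Lemma mxrank_le1_rows_sub X (v : 'rV_q) :
  (forall i, (row i X <= v)%MS) -> (\rank X <= 1)%N.
Proof. by move/row_subP/mxrankS/leq_trans; apply; exact: rank_leq_row. Qed.

Lemma mxrank_le_row_update A B i0 :
  (forall i, i != i0 -> row i A = row i B) -> (\rank A <= \rank B + 1)%N.
Proof.
move=> AB; rewrite -[A](subrK B) addrC.
apply: leq_trans (mxrank_add _ _) _; rewrite leq_add2l.
apply: (@mxrank_le1_rows_sub _ (row i0 (A - B))) => i.
have [-> | /AB ABi] := eqVneq i i0; first exact: submx_refl.
by rewrite linearB /= ABi subrr sub0mx.
Qed.

End MxRank.

Section Log2.
Variable R : realType.

Lemma log2_natr_le (k l : nat) : (k <= l)%N -> log2 (k%:R : R) <= log2 l%:R.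
Proof.
move=> kl; rewrite ler_pM2r ?invr_gt0 ?ln_gt0 ?ltr1n //.
case: (posnP k) => [->|k_gt0].
  case: (posnP l) => [-> // | l_gt0].
  by rewrite ln0 // ln_ge0 // ler1n.
by rewrite ler_ln ?posrE ?ltr0n ?ler_nat //; lia.
Qed.

Lemma log2_natr_lt (k l : nat) : (0 < k)%N -> (k < l)%N -> log2 (k%:R : R) < log2 l%:R.
Proof.
move=> k_gt0 kl; rewrite ltr_pM2r ?invr_gt0 ?ln_gt0 ?ltr1n //.
by rewrite ltr_ln ?posrE ?ltr0n ?ltr_nat //; lia.
Qed.

Lemma log2_natrM (k l : nat) : (0 < k)%N -> (0 < l)%N ->
  log2 ((k * l)%:R : R) = log2 k%:R + log2 l%:R.
Proof. by move=> k_gt0 l_gt0; rewrite /log2 natrM lnM ?posrE ?ltr0n // mulrDl. Qed.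

Lemma log2_rank_gain (r r1 r2 rU : nat) :
    (r <= r1 + 1)%N -> (2 <= r1)%N -> (2 <= r2)%N -> (rU <= 1)%N ->
  log2 (r%:R : R) + log2 rU%:R < log2 r1%:R + log2 r2%:R.
Proof.
move=> r_le r1_ge2 r2_ge2 rU_le1.
have log2rU : log2 (rU%:R : R) <= 0.
  by have := log2_natr_le rU_le1; rewrite /log2 ln1 mul0r.
have r1S_gt0 : (0 < r1 + 1)%N by rewrite addn1.
have r1S_lt : (r1 + 1 < r1 * r2)%N by nia.
have := log2_natr_le r_le; have := log2_natr_lt r1S_gt0 r1S_lt.
rewrite log2_natrM; [lra | lia | lia].
Qed.

End Log2.

Section Channels.
Variables (R : realType) (m n : nat).
Implicit Types (E F : detchan m n) (lam : {ffun detchan m n -> R}).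

Definition redirect E (i0 : 'I_m) (c : 'I_n) : detchan m n :=
  [ffun i => if i == i0 then c else E i].

Definition log2rank E : R := log2 (\rank (detmx R E))%:R.

Lemma row_detmx E i : row i (detmx R E) = delta_mx 0 (E i).
Proof. by apply/rowP => c; rewrite !mxE eqxx eq_sym. Qed.

Lemma rank_detmx_Uchan (j : 'I_n) : (\rank (detmx R (Uchan m j)) <= 1)%N.
Proof.
by apply: (@mxrank_le1_rows_sub _ _ _ _ (delta_mx 0 j)) => i; rewrite row_detmx ffunE.
Qed.

Lemma rank_detmx_ge k (s : 'I_k -> 'I_m) E :
  injective (E \o s) -> (k <= \rank (detmx R E))%N.
Proof.
move=> Es_inj; set A := rowsub s (detmx R E).
have AAt : A *m A^T = 1%:M.
  apply/matrixP => a b; rewrite !mxE.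
  under eq_bigr do rewrite !mxE eq_sym.
  by rewrite (sum_delta_scale (V := R^o)) (inj_eq Es_inj) eq_sym.
apply: leq_trans (mxrankS (rowsub_sub s (detmx R E))).
by rewrite -{1}(mxrank1 R k) -AAt mxrankM_maxl.
Qed.

Lemma rank_detmx_ge2 E i1 i2 : E i1 != E i2 -> (2 <= \rank (detmx R E))%N.
Proof.
move=> E12; apply: (@rank_detmx_ge 2 (fun b => if b == ord0 then i1 else i2)).
move=> [[|[|a]] ?] [[|[|b]] ?] //= Eab; apply/val_inj => //=.
all: by move: E12; rewrite Eab eqxx.
Qed.

Lemma detmx_redirect_swap E F i0 :
  detmx R (redirect E i0 (F i0)) + detmx R (redirect F i0 (E i0))
  = detmx R E + detmx R F.
Proof.
apply/matrixP => i c; rewrite !mxE !ffunE.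
by case: ifP => [/eqP ->|_]; rewrite // addrC.
Qed.

Lemma rank_detmx_redirect E i0 c :
  (\rank (detmx R E) <= \rank (detmx R (redirect E i0 c)) + 1)%N.
Proof.
apply: (mxrank_le_row_update (i0 := i0)) => i /negbTE i_ne.
by rewrite !row_detmx ffunE i_ne.
Qed.

Lemma log2rank_exchange_gain E (j : 'I_n) i1 i2 :
    i1 != i2 -> E i1 != j -> E i2 != j ->
  log2rank E + log2rank (Uchan m j)
  < log2rank (redirect E i1 j) + log2rank (redirect (Uchan m j) i1 (E i1)).
Proof.
move=> i12 E1 E2; have i21 : (i2 == i1) = false by rewrite eq_sym (negbTE i12).
apply: log2_rank_gain.
- exact: rank_detmx_redirect.
- by apply: (@rank_detmx_ge2 _ i1 i2); rewrite !ffunE eqxx i21 eq_sym.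
- by apply: (@rank_detmx_ge2 _ i1 i2); rewrite !ffunE eqxx i21.
- exact: rank_detmx_Uchan.
Qed.

Lemma C11_le_C11bar lam : is_distr lam -> C11 lam <= C11bar (mixture lam).
Proof.
move=> lam_distr; apply: sup_upper_bound; last by exists lam.
split; first by exists (C11 lam), lam.
exists (\sum_E `|log2rank E|) => _ [mu [[mu_ge0 mu_sum1] _] <-].
apply: ler_sum => E _.
have mu_le1 : mu E <= 1 by rewrite -mu_sum1 (bigD1 E) //= lerDl sumr_ge0.
apply: le_trans (ler_piMl (normr_ge0 _) mu_le1).
by rewrite ler_wpM2l // ler_norm.
Qed.

Lemma C11_lt_C11bar lam A B A' B' :
    is_distr lam -> 0 < lam A -> 0 < lam B ->
    detmx R A' + detmx R B' = detmx R A + detmx R B ->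
    log2rank A + log2rank B < log2rank A' + log2rank B' ->
  C11 lam < C11bar (mixture lam).
Proof.
move=> [lam_ge0 lam_sum1] lamA lamB mix_eq gain.
pose t := Num.min (lam A) (lam B) / 2.
have t_gt0 : 0 < t by rewrite divr_gt0 // lt_min lamA lamB.
have t2 : t *+ 2 = Num.min (lam A) (lam B) by rewrite -mulr_natr divfK ?pnatr_eq0.
have tA : t *+ 2 <= lam A by rewrite t2 ge_min lexx.
have tB : t *+ 2 <= lam B by rewrite t2 ge_min lexx orbT.
pose mu := shift_mass lam t A B A' B'.
have mu_mix : mixture mu = mixture lam.
  by rewrite /mixture sum_shift_mass mix_eq -addrA -opprD subrr scaler0 addr0.
have mu_distr : is_distr mu.
  split; first exact: shift_mass_ge0 lam_ge0 (ltW t_gt0) tA tB.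
  rewrite -(eq_bigr _ (fun E _ => mulr1 (mu E))) (sum_shift_mass (V := R^o)).
  by rewrite (eq_bigr _ (fun E _ => mulr1 (lam E))) lam_sum1 addrK subrr scaler0 addr0.
have mu_C11 : C11 mu = C11 lam
    + t * (log2rank A' + log2rank B' - log2rank A - log2rank B).
  exact: (sum_shift_mass (V := R^o)).
have : 0 < t * (log2rank A' + log2rank B' - log2rank A - log2rank B).
  by apply: mulr_gt0 => //; lra.
have := C11_le_C11bar mu_distr; rewrite mu_mix mu_C11; lra.
Qed.

Lemma two_rows_off_column E (j : 'I_n) :
    (2 <= m)%N -> (#|[set i | detmx R E i j != 0%R]| <= m - 2)%N ->
  exists i1 i2, [/\ i1 != i2, E i1 != j & E i2 != j].
Proof.
move=> m_ge2; set S := [set i | _] => S_le.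
have : (1 < #|~: S|)%N by have := cardsC S; rewrite card_ord; lia.
have off_S i : (i \in ~: S) = (E i != j) by rewrite !inE negbK mxE pnatr_eq0 eqb0.
by case/card_gt1P => i1 [i2 [+ + i12]]; rewrite !off_S; exists i1, i2.
Qed.

End Channels.

Theorem proposition6 (R : realType) (m n : nat) (hm : (2 <= m)%N) (hn : (2 <= n)%N)
  (D : detchan m n) (j : 'I_n) :
  (#|[set i : 'I_m | detmx R D i j != 0%R]| <= m - 2)%N ->
  ~ I_maximized R [set D; Uchan m j].
Proof.
move=> col_le [lam [lam_distr [supp_lam C11_lam]]].
have [i1 [i2 [i12 D1 D2]]] := two_rows_off_column hm col_le.
have lam_gt0 E : E \in [set D; Uchan m j] -> 0 < lam E.
  by have [lam_ge0 _] := lam_distr; rewrite -supp_lam inE lt0r lam_ge0 andbT.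
have swap := detmx_redirect_swap R D (Uchan m j) i1; rewrite ffunE in swap.
have := C11_lt_C11bar lam_distr (lam_gt0 D (set21 _ _)) (lam_gt0 _ (set22 _ _))
  swap (log2rank_exchange_gain R i12 D1 D2).
by rewrite C11_lam ltxx.
Qed.
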